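(* Let $w$ and $q$ be probability measures on $(\mathsf{Y},\mathcal{Y})$ with $D_{1/2}(w\|q)<\infty$. Then for all $\kappa\in\mathbb{R}_+$ and $\alpha\in(0,1)$, $$E_{w_\alpha^q}\big[|\xi_\alpha|^\kappa\big]^{1/\kappa}\le3^{1/\kappa}\,\frac{((1-\alpha)D_\alpha(w\|q))\vee\kappa}{\alpha(1-\alpha)},$$ where $\xi_\alpha=\ln\frac{dw_{ac}}{dq}-E_{w_\alpha^q}\big[\ln\frac{dw_{ac}}{dq}\big]$ and $w_{ac}$ is the component of $w$ absolutely continuous with respect to $q$ in the Lebesgue decomposition of $w$.
   Context: Rényi divergence $D_\alpha(w\|q)=\frac{1}{\alpha-1}\ln E_\nu[(\frac{dw}{d\nu})^\alpha(\frac{dq}{d\nu})^{1-\alpha}]$ for $\alpha\ne1$, $D_1$ the Kullback–Leibler divergence, $\nu$ any dominating probability measure. For $\alpha\in(0,1)$ with $D_\alpha(w\|q)<\infty$, the tilted probability measure $w_\alpha^q$ is defined by $\frac{dw_\alpha^q}{d\nu}=e^{(1-\alpha)D_\alpha(w\|q)}(\frac{dw}{d\nu})^\alpha(\frac{dq}{d\nu})^{1-\alpha}$. *)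

From mathcomp Require Import all_boot all_order all_algebra.
From mathcomp Require Import all_classical all_reals all_analysis.
Set Implicit Arguments. Unset Strict Implicit. Unset Printing Implicit Defensive.
Import Order.TTheory GRing.Theory Num.Theory.
Local Open Scope classical_set_scope.
Local Open Scope ring_scope.

(* Setting: w and q are given by densities f, g : Y -> R (nonnegative,
   measurable) w.r.t. a dominating probability measure nu, i.e.
   w(A) = \int_A f dnu, q(A) = \int_A g dnu.                            *)

Section renyi.
Context {R : realType} {d : measure_display} {Y : measurableType d}.
Variable nu : probability Y R.
Variables f g : Y -> R.

(* E_nu[(dw/dnu)^a (dq/dnu)^(1-a)]  (convention 0 `^ a = 0 for a <> 0) *)
Definition hellinger_int (a : R) : \bar R :=
  (\int[nu]_x ((f x `^ a) * (g x `^ (1 - a)))%:E)%E.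

Definition renyi_div (a : R) : \bar R :=
  if hellinger_int a == 0%E then +oo%E
  else ((a - 1)^-1 * ln (fine (hellinger_int a)))%:E.

(* density of the tilted measure w_a^q with respect to nu:
   e^{(1-a) D_a(w||q)} f^a g^(1-a) = f^a g^(1-a) / E_nu[f^a g^(1-a)] *)
Definition tilted_dens (a : R) (x : Y) : R :=
  (f x `^ a) * (g x `^ (1 - a)) / fine (hellinger_int a).

Definition tilted_expect (a : R) (phi : Y -> \bar R) : \bar R :=
  (\int[nu]_x ((tilted_dens a x)%:E * phi x))%E.

(* ln (dw_ac/dq): on {g > 0} the Radon-Nikodym derivative of the part of
   w absolutely continuous w.r.t. q is f/g.  (Outside the support of the
   tilted measure, i.e. where f = 0 or g = 0, the value is irrelevant since
   the tilted density vanishes there.) *)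
Definition log_lr (x : Y) : R := ln (f x / g x).

Definition xi (a : R) (x : Y) : R :=
  log_lr x - fine (tilted_expect a (fun y => (log_lr y)%:E)).

End renyi.

From mathcomp Require Import all_boot all_order all_algebra.
From mathcomp Require Import all_classical all_reals all_analysis.
From mathcomp Require Import measurable_realfun ring lra.
Set Implicit Arguments. Unset Strict Implicit. Unset Printing Implicit Defensive.
Import Order.TTheory GRing.Theory Num.Theory.
Local Open Scope classical_set_scope.
Local Open Scope ring_scope.

(* Write Q_a = f^a g^(1-a) and K(a) = \int Q_a, so that the tilted density is
   Q_a / K(a) and Q_a * exp (t * ln (f/g)) = Q_(a+t): exponential moments of
   ln (f/g) under the tilted measure are ratios K(a + t) / K(a).  By Hoelder,
   ln K is convex on [0, 1] with K(0) = K(1) = 1, whence, for c = - ln K(a) =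
   (1 - a) D_a, K(a + s) <= K(a) e^(s c / (1 - a)) and K(a - s) <= K(a) e^(s c / a);
   Jensen bounds the centring factors e^(-+ s m) in the same way.  Together with
   x^k <= (k / (e s))^k e^(s x) and s = k a (1 - a) / max(c, k), the k-th central
   moment of ln (f/g) is at most 2 (max(c, k) / (a (1 - a)))^k, and 2 <= 3. *)

Section real_inequalities.
Variable R : realType.
Implicit Types k r s t u v x y z : R.

Lemma itv01W x : 0 < x < 1 -> 0 <= x <= 1.
Proof. by case/andP=> x0 x1; rewrite !ltW. Qed.

Lemma expR_tangent_le x z : expR z * (1 + (x - z)) <= expR x.
Proof.
have -> : expR x = expR z * expR (x - z) by rewrite -expRD addrC subrK.
by rewrite ler_wpM2l ?expR_ge0 ?expR_ge1Dx.
Qed.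

Lemma powR_geo_mean_le u v t : 0 <= u -> 0 <= v -> 0 <= t <= 1 ->
  u `^ t * v `^ (1 - t) <= t * u + (1 - t) * v.
Proof.
move=> u0 v0 /andP[t0 t1].
have [->|tn0] := eqVneq t 0.
  by rewrite powRr0 subr0 powRr1 // !mul1r mul0r add0r.
have [->|tn1] := eqVneq t 1.
  by rewrite subrr powRr0 powRr1 // mulr1 mul1r mul0r addr0.
have tp : 0 < t by rewrite lt_neqAle eq_sym tn0.
have tp1 : 0 < 1 - t by rewrite subr_gt0 lt_neqAle tn1.
have pq : t^-1^-1 + (1 - t)^-1^-1 = 1 by rewrite !invrK addrC subrK.
have := @conjugate_powR R (u `^ t) (v `^ (1 - t)) t^-1 (1 - t)^-1.
rewrite !invr_gt0 => /(_ (powR_ge0 _ _) (powR_ge0 _ _) tp tp1 pq).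
by rewrite -!powRrM !divff ?gt_eqF // !powRr1 // !invrK [u * _]mulrC [v * _]mulrC.
Qed.

Lemma powRD_ge0 x r s : 0 <= r -> 0 <= s -> x `^ (r + s) = x `^ r * x `^ s.
Proof.
move=> r0 s0; have [rs0|rsn0] := eqVneq (r + s) 0.
  have [-> ->] : r = 0 /\ s = 0 by split; lra.
  by rewrite addr0 powRr0 mulr1.
by rewrite powRD // (negbTE rsn0).
Qed.

(* [x ^ k * expR (- s * x)] is maximal at [x = k / s]. *)
Lemma powR_le_expR x k s : 0 <= x -> 0 < k -> 0 < s ->
  x `^ k <= (k / s) `^ k * expR (- k) * expR (s * x).
Proof.
move=> x0 k0 s0; set M := k / s; have M0 : 0 < M by rewrite divr_gt0.
have [->|xn0] := eqVneq x 0.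
  by rewrite powR0 ?gt_eqF // !mulr_ge0 ?powR_ge0 ?expR_ge0.
have xp : 0 < x by rewrite lt_neqAle eq_sym xn0.
rewrite /powR (gt_eqF xp) (gt_eqF M0) -!expRD ler_expR.
have y1 : -1 < x / M - 1 by have := divr_gt0 xp M0; lra.
have := le_ln1Dx y1; rewrite addrC subrK lnM ?posrE ?invr_gt0 // lnV ?posrE //.
move=> /(ler_wpM2l (ltW k0)) hln.
have -> : s * x = k * (x / M) by rewrite /M; field; rewrite !gt_eqF.
lra.
Qed.

Lemma expR_normr_le s y : 0 <= s ->
  expR (s * `|y|) <= expR (s * y) + expR (- s * y).
Proof.
move=> s0; rewrite mulNr; have [y0|y0] := lerP 0 y.
  by rewrite ger0_norm // lerDl expR_ge0.
by rewrite ltr0_norm // mulrN lerDr expR_ge0.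
Qed.

End real_inequalities.

Section integral_inequalities.
Context d (T : measurableType d) (R : realType) (mu : {measure set T -> \bar R}).
Local Notation integrableR h := (mu.-integrable setT (EFin \o h)).
Implicit Types (u v w phi : T -> R).

Lemma integrableRZl k u : integrableR u -> integrableR (fun x => k * u x).
Proof.
move=> iu; apply: (eq_integrable measurableT _ _ _ (integrableZl measurableT k iu)).
by move=> x _; rewrite /= EFinM.
Qed.

Lemma integrableR_comb a b u v : integrableR u -> integrableR v ->
  integrableR (fun x => a * u x + b * v x).
Proof.
move=> iu iv; apply: (eq_integrable measurableT _ _ _ (integrableD measurableT
  (integrableRZl a iu) (integrableRZl b iv))) => x _.
by rewrite /= EFinD.
Qed.

Lemma Rintegral_comb a b u v : integrableR u -> integrableR v ->
  \int[mu]_x (a * u x + b * v x) = a * \int[mu]_x u x + b * \int[mu]_x v x.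
Proof.
by move=> iu iv; rewrite RintegralD ?RintegralZl ?integrableRZl.
Qed.

Lemma integrableR_dominated u v : measurable_fun setT u ->
  (forall x, `|u x| <= v x) -> integrableR v -> integrableR u.
Proof.
move=> mfu uv iv; apply: le_integrable iv => //; first exact/measurable_EFinP.
by move=> x _ /=; rewrite lee_fin (le_trans (uv x)) ?ler_norm.
Qed.

Lemma integral_EFin_Rintegral u : integrableR u ->
  (\int[mu]_x (u x)%:E)%E = (\int[mu]_x u x)%:E.
Proof. by move=> iu; rewrite /Rintegral fineK // integrable_fin_num. Qed.

Lemma integrableR_geo_mean u v t : 0 <= t <= 1 ->
  (forall x, 0 <= u x) -> (forall x, 0 <= v x) ->
  integrableR u -> integrableR v ->
  integrableR (fun x => u x `^ t * v x `^ (1 - t)).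
Proof.
move=> t01 u0 v0 iu iv.
apply: (integrableR_dominated _ _ (integrableR_comb t (1 - t) iu iv)).
  apply: measurable_funM; apply: measurableT_comp (measurable_powR _) _;
    exact/measurable_EFinP/(measurable_int mu).
by move=> x; rewrite ger0_norm ?mulr_ge0 ?powR_ge0 ?powR_geo_mean_le.
Qed.

(* Young's inequality applied to [u / \int u] and [v / \int v]. *)
Lemma Rintegral_geo_mean_le u v t : 0 < t < 1 ->
  (forall x, 0 <= u x) -> (forall x, 0 <= v x) ->
  integrableR u -> integrableR v ->
  0 < \int[mu]_x u x -> 0 < \int[mu]_x v x ->
  \int[mu]_x (u x `^ t * v x `^ (1 - t)) <=
    (\int[mu]_x u x) `^ t * (\int[mu]_x v x) `^ (1 - t).
Proof.
move=> /andP[t0 t1] u0 v0 iu iv U0 V0.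
set U := \int[mu]_x u x; set V := \int[mu]_x v x.
set c := U `^ t * V `^ (1 - t).
have t01 : 0 <= t <= 1 by rewrite !ltW.
have [Un0 Vn0] : U != 0 /\ V != 0 by rewrite !gt_eqF.
have pt x : u x `^ t * v x `^ (1 - t) <= c * t / U * u x + c * (1 - t) / V * v x.
  have eu : u x `^ t = (u x / U) `^ t * U `^ t.
    by rewrite -powRM ?divfK ?divr_ge0 ?u0 ?v0 ?ltW.
  have ev : v x `^ (1 - t) = (v x / V) `^ (1 - t) * V `^ (1 - t).
    by rewrite -powRM ?divfK ?divr_ge0 ?u0 ?v0 ?ltW.
  have young := powR_geo_mean_le (divr_ge0 (u0 x) (ltW U0))
    (divr_ge0 (v0 x) (ltW V0)) t01.
  have -> : c * t / U * u x + c * (1 - t) / V * v x =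
      c * (t * (u x / U) + (1 - t) * (v x / V)) by ring.
  have -> : u x `^ t * v x `^ (1 - t) = c * ((u x / U) `^ t * (v x / V) `^ (1 - t)).
    by rewrite eu ev /c; ring.
  by rewrite ler_wpM2l ?mulr_ge0 ?powR_ge0.
apply: le_trans (le_Rintegral measurableT _ (integrableR_comb _ _ iu iv)
  (fun x _ => pt x)) _.
  exact: integrableR_geo_mean.
by rewrite Rintegral_comb // -/U -/V !divfK // -mulrDr addrC subrK mulr1.
Qed.

Lemma expR_Rintegral_le w phi : (forall x, 0 <= w x) ->
  integrableR w -> integrableR (fun x => w x * phi x) ->
  integrableR (fun x => w x * expR (phi x)) -> 0 < \int[mu]_x w x ->
  expR (\int[mu]_x (w x * phi x) / \int[mu]_x w x) * \int[mu]_x w x <=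
    \int[mu]_x (w x * expR (phi x)).
Proof.
move=> w0 iw iwphi iwexp W0.
set W := \int[mu]_x w x; set m := \int[mu]_x (w x * phi x) / W.
have tangent x : expR m * (1 - m) * w x + expR m * (w x * phi x) <=
    w x * expR (phi x).
  have -> : expR m * (1 - m) * w x + expR m * (w x * phi x) =
    w x * (expR m * (1 + (phi x - m))) by ring.
  by rewrite ler_wpM2l ?expR_tangent_le.
apply: le_trans (le_Rintegral measurableT (integrableR_comb _ _ iw iwphi) iwexp
  (fun x _ => tangent x)).
have WE : \int[mu]_x (w x * phi x) = m * W by rewrite /m divfK ?gt_eqF.
by rewrite Rintegral_comb // -/W WE [leRHS](_ : _ = expR m * W) //; ring.
Qed.

Lemma Rintegral_eq0_support u v :
  measurable_fun setT u -> measurable_fun setT v ->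
  (forall x, 0 <= u x) -> (forall x, 0 <= v x) -> integrableR u ->
  (forall x, u x = 0 -> v x = 0) ->
  \int[mu]_x u x = 0 -> \int[mu]_x v x = 0.
Proof.
move=> mfu mfv u0 v0 iu uv U0.
have absE w : (forall x, 0 <= w x) ->
    (\int[mu]_x `|(EFin \o w) x|)%E = (\int[mu]_x (w x)%:E)%E.
  by move=> w0; apply: eq_integral => x _; rewrite gee0_abs // lee_fin.
have mEu : measurable_fun setT (EFin \o u) by exact/measurable_EFinP.
have mEv : measurable_fun setT (EFin \o v) by exact/measurable_EFinP.
have uae : ae_eq mu setT (EFin \o u) (cst 0%E).
  apply/(ae_eq_integral_abs mu measurableT mEu).
  by rewrite absE // integral_EFin_Rintegral // U0.
have vae : ae_eq mu setT (EFin \o v) (cst 0%E).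
  by apply: filterS uae => x h /h [] /uv /= ->.
have := (ae_eq_integral_abs mu measurableT mEv).2 vae.
by rewrite absE // /Rintegral => ->.
Qed.

Lemma density_integrable (P : probability T R) u : measurable_fun setT u ->
  (forall x, 0 <= u x) ->
  (forall A, measurable A -> P A = (\int[mu]_(x in A) (u x)%:E)%E) ->
  integrableR u /\ \int[mu]_x u x = 1.
Proof.
move=> mfu u0 Pu.
have U1 : (\int[mu]_x (u x)%:E = 1)%E by rewrite -Pu // probability_setT.
split; last by rewrite /Rintegral U1.
apply/integrableP; split; first exact/measurable_EFinP.
under eq_integral do rewrite /= ger0_norm //.
by rewrite U1 ltry.
Qed.

End integral_inequalities.

Section hellinger.
Context {R : realType} {d : measure_display} {Y : measurableType d}.
Variables (nu : probability Y R) (f g : Y -> R).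
Hypotheses (mf : measurable_fun setT f) (mg : measurable_fun setT g).
Hypotheses (f0 : forall x, 0 <= f x) (g0 : forall x, 0 <= g x).
Hypotheses (intf : nu.-integrable setT (EFin \o f))
  (intg : nu.-integrable setT (EFin \o g)).
Hypotheses (f1 : \int[nu]_x f x = 1) (g1 : \int[nu]_x g x = 1).
Local Notation integrableR h := (nu.-integrable setT (EFin \o h)).
Local Notation llr := (log_lr f g).

Definition hellinger_dens a x := f x `^ a * g x `^ (1 - a).
Definition hellinger a := \int[nu]_x hellinger_dens a x.
Definition tilted_mean a := \int[nu]_x (hellinger_dens a x * llr x) / hellinger a.

Lemma hellinger_dens_ge0 a x : 0 <= hellinger_dens a x.
Proof. by rewrite mulr_ge0 ?powR_ge0. Qed.

Lemma measurable_hellinger_dens a : measurable_fun setT (hellinger_dens a).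
Proof. by apply: measurable_funM; apply: measurableT_comp (measurable_powR _) _. Qed.

Lemma integrable_hellinger_dens a : 0 <= a <= 1 -> integrableR (hellinger_dens a).
Proof. by move=> a01; exact: integrableR_geo_mean. Qed.

Lemma hellinger_dens1 : hellinger_dens 1 = f.
Proof. by apply/funext => x; rewrite /hellinger_dens subrr powRr0 mulr1 powRr1. Qed.

Lemma hellinger_dens0 : hellinger_dens 0 = g.
Proof. by apply/funext => x; rewrite /hellinger_dens subr0 powRr0 mul1r powRr1. Qed.

Lemma hellinger_densE a x : 0 < a < 1 -> hellinger_dens a x =
  if (0 < f x) && (0 < g x) then expR (a * ln (f x) + (1 - a) * ln (g x)) else 0.
Proof.
move=> /andP[a0 a1]; rewrite /hellinger_dens.
have [fp|fle] := ltP 0 (f x); last first.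
  have -> : f x = 0 by apply/eqP; rewrite eq_le fle f0.
  by rewrite powR0 ?gt_eqF // mul0r.
have [gp|gle] /= := ltP 0 (g x); last first.
  have -> : g x = 0 by apply/eqP; rewrite eq_le gle g0.
  by rewrite (@powR0 _ (1 - a)) ?mulr0 // subr_eq0 gt_eqF.
by rewrite /powR !gt_eqF // -expRD.
Qed.

Lemma hellinger_dens_interp a c t x : 0 <= a <= 1 -> 0 <= c <= 1 -> 0 <= t <= 1 ->
  hellinger_dens (t * a + (1 - t) * c) x =
    hellinger_dens a x `^ t * hellinger_dens c x `^ (1 - t).
Proof.
move=> /andP[a0 a1] /andP[c0 c1] /andP[t0 t1]; rewrite /hellinger_dens.
rewrite !powRM ?powR_ge0 // -!powRrM.
have -> : 1 - (t * a + (1 - t) * c) = (1 - a) * t + (1 - c) * (1 - t) by ring.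
rewrite [t * a]mulrC [(1 - t) * c]mulrC !powRD_ge0 ?mulr_ge0 ?subr_ge0 //.
by rewrite mulrACA.
Qed.

Lemma hellinger_log_convex a c t : 0 <= a <= 1 -> 0 <= c <= 1 -> 0 < t < 1 ->
  0 < hellinger a -> 0 < hellinger c ->
  hellinger (t * a + (1 - t) * c) <= hellinger a `^ t * hellinger c `^ (1 - t).
Proof.
move=> a01 c01 t01 Ka Kc; have /andP[t0 t1] := t01.
have t01' : 0 <= t <= 1 by rewrite !ltW.
rewrite {1}/hellinger (eq_Rintegral _ (fun x _ => hellinger_dens_interp x a01 c01 t01')).
by apply: Rintegral_geo_mean_le; rewrite ?integrable_hellinger_dens //;
  exact: hellinger_dens_ge0.
Qed.

Lemma hellinger1 : hellinger 1 = 1.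
Proof. by rewrite /hellinger hellinger_dens1. Qed.

Lemma hellinger0 : hellinger 0 = 1.
Proof. by rewrite /hellinger hellinger_dens0. Qed.

Lemma hellinger_shiftD a s : 0 < a -> 0 < s -> a + s < 1 -> 0 < hellinger a ->
  hellinger (a + s) <= hellinger a * expR (- s * ln (hellinger a) / (1 - a)).
Proof.
move=> a0 s0 as1 Ka; set t := (1 - a - s) / (1 - a).
have a1 : 1 - a != 0 by rewrite subr_eq0 gt_eqF //; lra.
have t01 : 0 < t < 1 by rewrite divr_gt0 ?ltr_pdivrMr /=; lra.
have -> : a + s = t * a + (1 - t) * 1 by rewrite /t; field.
apply: le_trans (hellinger_log_convex _ _ t01 Ka _) _; rewrite ?hellinger1 //.
- by rewrite ltW ?a0 //=; lra.
- by rewrite ler01 lexx.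
rewrite powR1 mulr1 /powR gt_eqF // -{2}[hellinger a]lnK ?posrE // -expRD.
by rewrite ler_expR [leRHS](_ : _ = t * ln (hellinger a)) // /t; field.
Qed.

Lemma hellinger_shiftB a s : 0 < s -> s < a -> a < 1 -> 0 < hellinger a ->
  hellinger (a - s) <= hellinger a * expR (- s * ln (hellinger a) / a).
Proof.
move=> s0 sa a1 Ka; set t := (a - s) / a.
have an0 : a != 0 by rewrite gt_eqF //; lra.
have t01 : 0 < t < 1 by rewrite divr_gt0 ?ltr_pdivrMr /=; lra.
have -> : a - s = t * a + (1 - t) * 0 by rewrite /t; field.
apply: le_trans (hellinger_log_convex _ _ t01 Ka _) _; rewrite ?hellinger0 //.
- by rewrite ltW ?ltW //=; lra.
- by rewrite ler01 lexx.
rewrite powR1 mulr1 /powR gt_eqF // -{2}[hellinger a]lnK ?posrE // -expRD.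
by rewrite ler_expR [leRHS](_ : _ = t * ln (hellinger a)) // /t; field.
Qed.

Lemma measurable_log_lr : measurable_fun setT llr.
Proof.
have -> : llr = @ln R \o (fun x => f x * g x `^ (-1)).
  by apply/funext => x; rewrite /log_lr /= powR_inv1.
apply: measurableT_comp (@measurable_ln R) _.
by apply: measurable_funM mf _; exact: measurableT_comp (measurable_powR _) mg.
Qed.

Lemma hellinger_dens_expR a t x : 0 < a < 1 -> 0 < a + t < 1 ->
  hellinger_dens a x * expR (t * llr x) = hellinger_dens (a + t) x.
Proof.
move=> a01 at01; rewrite !hellinger_densE //.
case: ifPn => [/andP[fp gp]|_]; last by rewrite mul0r.
rewrite -expRD /log_lr lnM ?posrE ?invr_gt0 // lnV ?posrE //.
by congr expR; ring.
Qed.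

Lemma integrable_hellinger_dens_log_lr a : 0 < a < 1 ->
  integrableR (fun x => hellinger_dens a x * llr x).
Proof.
move=> /andP[a0 a1]; set s := a * (1 - a) / 2.
have s0 : 0 < s by rewrite divr_gt0 // mulr_gt0 // subr_gt0.
have [sa s1a] : s < a /\ s < 1 - a by rewrite /s; split; nra.
have aD : 0 < a + s < 1 by apply/andP; split; lra.
have aB : 0 < a + - s < 1 by apply/andP; split; lra.
apply: (integrableR_dominated _ _ (integrableR_comb s^-1 s^-1
  (integrable_hellinger_dens (itv01W aD)) (integrable_hellinger_dens (itv01W aB)))).
  exact: measurable_funM (measurable_hellinger_dens a) measurable_log_lr.
move=> x; rewrite normrM ger0_norm ?hellinger_dens_ge0 //.
have a01 : 0 < a < 1 by rewrite a0.
rewrite -(hellinger_dens_expR x a01 aD) -(hellinger_dens_expR x a01 aB).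
rewrite (mulrCA s^-1) (mulrCA s^-1) -mulrDr ler_wpM2l ?hellinger_dens_ge0 //.
rewrite -mulrDr ler_pdivlMl //.
have := expR_normr_le (llr x) (ltW s0); have := expR_ge1Dx (s * `|llr x|).
lra.
Qed.

Lemma hellinger_jensen a t : 0 < a < 1 -> 0 < a + t < 1 -> 0 < hellinger a ->
  expR (t * tilted_mean a) * hellinger a <= hellinger (a + t).
Proof.
move=> a01 at01 Ka; have ilr := integrable_hellinger_dens_log_lr a01.
have eexp x := hellinger_dens_expR x a01 at01.
have eZ x : hellinger_dens a x * (t * llr x) = t * (hellinger_dens a x * llr x).
  by rewrite mulrCA.
have := expR_Rintegral_le (phi := fun x => t * llr x) (@hellinger_dens_ge0 a)
  (integrable_hellinger_dens (itv01W a01)).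
rewrite (eq_Rintegral _ (fun x _ => eZ x)) (eq_Rintegral _ (fun x _ => eexp x)).
rewrite RintegralZl // -mulrA; apply.
- by apply: (eq_integrable measurableT _ _ _ (integrableRZl t ilr)) => x _; rewrite /= eZ.
- apply: (eq_integrable measurableT _ _ _ (integrable_hellinger_dens (itv01W at01))).
  by move=> x _; rewrite /= eexp.
- exact: Ka.
Qed.

Lemma hellinger_ge0 a : 0 <= hellinger a.
Proof. by apply: Rintegral_ge0 => x _; exact: hellinger_dens_ge0. Qed.

Lemma hellinger_mgf_le a s : 0 < s -> s < a -> s < 1 - a -> 0 < hellinger a ->
  expR (- s * tilted_mean a) * hellinger (a + s) +
  expR (s * tilted_mean a) * hellinger (a - s) <=
  2 * hellinger a * expR (- s * ln (hellinger a) / (a * (1 - a))).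
Proof.
move=> s0 sa s1a Ka; set K := hellinger a; set m := tilted_mean a.
set X := - s * ln K.
have [a0 a1] : 0 < a /\ a < 1 by split; lra.
have a01 : 0 < a < 1 by rewrite a0 a1.
have aD : 0 < a + s < 1 by apply/andP; split; lra.
have aB : 0 < a + - s < 1 by apply/andP; split; lra.
have KD : hellinger (a + s) <= K * expR (X / (1 - a)).
  by apply: hellinger_shiftD => //; lra.
have KB : hellinger (a - s) <= K * expR (X / a) by exact: hellinger_shiftB.
have mD : expR (s * m) <= expR (X / (1 - a)).
  rewrite -(ler_pM2r Ka) [expR (X / (1 - a)) * K]mulrC.
  exact: le_trans (hellinger_jensen a01 aD Ka) KD.
have mB : expR (- s * m) <= expR (X / a).
  rewrite -(ler_pM2r Ka) [expR (X / a) * K]mulrC.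
  exact: le_trans (hellinger_jensen a01 aB Ka) KB.
have eX : expR (X / a) * expR (X / (1 - a)) = expR (X / (a * (1 - a))).
  by rewrite -expRD; congr expR; field; rewrite !gt_eqF ?subr_gt0.
apply: le_trans (lerD (ler_pM (expR_ge0 _) (hellinger_ge0 _) mB KD)
  (ler_pM (expR_ge0 _) (hellinger_ge0 _) mD KB)) _.
by rewrite [leLHS](_ : _ = 2 * K * expR (X / (a * (1 - a)))) // -eX; ring.
Qed.

Lemma hellinger_dens_moment_le a k s m x : 0 < a < 1 -> 0 < k -> 0 < s ->
  s < a -> s < 1 - a ->
  hellinger_dens a x * `|llr x - m| `^ k <=
  (k / s) `^ k * expR (- k) * (expR (- s * m) * hellinger_dens (a + s) x +
                               expR (s * m) * hellinger_dens (a - s) x).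
Proof.
move=> a01 k0 s0 sa s1a; set C := (k / s) `^ k * expR (- k).
have aD : 0 < a + s < 1 by apply/andP; split; lra.
have aB : 0 < a + - s < 1 by apply/andP; split; lra.
rewrite -(hellinger_dens_expR x a01 aD) -(hellinger_dens_expR x a01 aB).
have -> : C * (expR (- s * m) * (hellinger_dens a x * expR (s * llr x)) +
      expR (s * m) * (hellinger_dens a x * expR (- s * llr x))) =
    hellinger_dens a x * (C * (expR (s * (llr x - m)) + expR (- s * (llr x - m)))).
  by rewrite !mulrBr !expRD !mulNr !opprK; ring.
rewrite ler_wpM2l ?hellinger_dens_ge0 //.
apply: le_trans (powR_le_expR (normr_ge0 _) k0 s0) _.
by rewrite ler_wpM2l ?mulr_ge0 ?powR_ge0 ?expR_ge0 ?expR_normr_le ?ltW.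
Qed.

Lemma integrable_hellinger_dens_moment a k m : 0 < a < 1 -> 0 < k ->
  integrableR (fun x => hellinger_dens a x * `|llr x - m| `^ k).
Proof.
move=> a01 k0; have /andP[a0 a1] := a01; set s := a * (1 - a) / 2.
have s0 : 0 < s by rewrite divr_gt0 // mulr_gt0 // subr_gt0.
have [sa s1a] : s < a /\ s < 1 - a by rewrite /s; split; nra.
have aD : 0 <= a + s <= 1 by apply/andP; split; lra.
have aB : 0 <= a + - s <= 1 by apply/andP; split; lra.
apply: (integrableR_dominated _ _ (integrableRZl _ (integrableR_comb
  (expR (- s * m)) (expR (s * m)) (integrable_hellinger_dens aD)
  (integrable_hellinger_dens aB)))).
  apply: measurable_funM (measurable_hellinger_dens a) _.
  apply: measurableT_comp (measurable_powR _) _.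
  apply: measurableT_comp (@normr_measurable R setT) _.
  exact: measurable_funB measurable_log_lr (measurable_cst _).
move=> x; rewrite ger0_norm ?mulr_ge0 ?hellinger_dens_ge0 ?powR_ge0 //.
exact: hellinger_dens_moment_le.
Qed.

Lemma hellinger_moment_le a k : 0 < a < 1 -> 0 < k -> 0 < hellinger a ->
  \int[nu]_x (hellinger_dens a x * `|llr x - tilted_mean a| `^ k) <=
  2 * (Num.max (- ln (hellinger a)) k / (a * (1 - a))) `^ k * hellinger a.
Proof.
move=> a01 k0 Ka; have /andP[a0 a1] := a01.
set K := hellinger a; set mx := Num.max _ _; set M := mx / _.
have mxk : k <= mx by rewrite le_max lexx orbT.
have mxK : - ln K <= mx by rewrite le_max lexx.
have mx0 : 0 < mx by exact: lt_le_trans mxk.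
have aa : 0 < a * (1 - a) by rewrite mulr_gt0 // subr_gt0.
have M0 : 0 < M by rewrite divr_gt0.
set s := k / M; have s0 : 0 < s by rewrite divr_gt0.
have es : s = k * (a * (1 - a)) / mx.
  by rewrite /s /M; field; rewrite !gt_eqF ?subr_gt0.
have sle : s <= a * (1 - a) by rewrite es ler_pdivrMr // mulrC ler_wpM2l // ltW.
have [sa s1a] : s < a /\ s < 1 - a by split; nra.
have iD : integrableR (hellinger_dens (a + s)).
  by apply: integrable_hellinger_dens; apply/andP; split; lra.
have iB : integrableR (hellinger_dens (a - s)).
  by apply: integrable_hellinger_dens; apply/andP; split; lra.
apply: le_trans (le_Rintegral measurableT (integrable_hellinger_dens_moment _ a01 k0)
  (integrableRZl _ (integrableR_comb _ _ iD iB))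
  (fun x _ => hellinger_dens_moment_le (tilted_mean a) x a01 k0 s0 sa s1a)) _.
rewrite RintegralZl ?integrableR_comb // Rintegral_comb //.
have C0 : 0 <= (k / s) `^ k * expR (- k) by rewrite mulr_ge0 ?powR_ge0 ?expR_ge0.
apply: le_trans (ler_wpM2l C0 (hellinger_mgf_le s0 sa s1a Ka)) _.
have kM : k / s = M by rewrite /s invf_div mulrCA divff ?mulr1 ?gt_eqF.
have eXk : expR (- s * ln K / (a * (1 - a))) <= expR k.
  rewrite ler_expR [leLHS](_ : _ = k * (- ln K / mx)); last first.
    by rewrite es; field; rewrite !gt_eqF ?subr_gt0.
  by rewrite ger_pMr // ler_pdivrMr // mul1r.
rewrite kM -/K [leRHS](_ : _ = M `^ k * expR (- k) * (2 * K * expR k)); last first.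
  by rewrite expRN; field; rewrite gt_eqF ?expR_gt0.
by rewrite ler_wpM2l ?mulr_ge0 ?powR_ge0 ?expR_ge0 // ler_wpM2l // mulr_ge0 // ltW.
Qed.

Lemma hellinger_intE a : 0 <= a <= 1 -> hellinger_int nu f g a = (hellinger a)%:E.
Proof.
by move=> a01; rewrite /hellinger_int integral_EFin_Rintegral ?integrable_hellinger_dens.
Qed.

Lemma renyi_divE a : 0 < a < 1 -> 0 < hellinger a ->
  ((1 - a)%:E * renyi_div nu f g a)%E = (- ln (hellinger a))%:E.
Proof.
move=> a01 Ka; have /andP[_ a1] := a01.
rewrite /renyi_div hellinger_intE ?itv01W // eqe gt_eqF //= -EFinM.
by congr EFin; field; rewrite subr_eq0 lt_eqF.
Qed.

(* [hellinger_dens a] has the same support [{f > 0} `&` {g > 0}] for every [0 < a < 1]. *)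
Lemma hellinger_gt0 a : (renyi_div nu f g (1 / 2) < +oo)%E -> 0 < a < 1 ->
  0 < hellinger a.
Proof.
move=> hD a01; have h12 : 0 < (1 / 2 : R) < 1 by rewrite divr_gt0 // ltr_pdivrMr //=; lra.
have K12 : hellinger (1 / 2) != 0.
  by move: hD; rewrite /renyi_div hellinger_intE ?itv01W // eqe; case: eqP.
rewrite lt_neqAle hellinger_ge0 andbT eq_sym; apply: contra K12 => /eqP Ka0.
apply/eqP; apply: (Rintegral_eq0_support (measurable_hellinger_dens a)
  (measurable_hellinger_dens _) (@hellinger_dens_ge0 a) (@hellinger_dens_ge0 _)
  (integrable_hellinger_dens (itv01W a01)) _ Ka0).
move=> x; rewrite !hellinger_densE //; case: ifP => // _ /eqP.
by rewrite gt_eqF // expR_gt0.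
Qed.

Lemma tilted_expectE a phi : integrableR (fun x => hellinger_dens a x * phi x) ->
  tilted_expect nu f g a (fun x => (phi x)%:E) =
    (\int[nu]_x (hellinger_dens a x * phi x) / hellinger a)%:E.
Proof.
move=> iphi; rewrite /tilted_expect /tilted_dens.
rewrite -[fine (hellinger_int _ _ _ _)]/(hellinger a).
rewrite (eq_integral (fun x => ((hellinger a)^-1 * (hellinger_dens a x * phi x))%:E)).
  by rewrite integral_EFin_Rintegral ?integrableRZl // RintegralZl // mulrC.
by move=> x _; rewrite -EFinM /hellinger_dens; congr EFin; ring.
Qed.

Lemma tilted_moment_le a k : 0 < a < 1 -> 0 < k -> 0 < hellinger a ->
  (poweR (tilted_expect nu f g a (fun x => (`|xi nu f g a x| `^ k)%:E)) k^-1 <=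
   (2 `^ k^-1 * (Num.max (- ln (hellinger a)) k / (a * (1 - a))))%:E)%E.
Proof.
move=> a01 k0 Ka; have /andP[a0 a1] := a01.
have meanE : fine (tilted_expect nu f g a (fun y => (llr y)%:E)) = tilted_mean a.
  by rewrite tilted_expectE // integrable_hellinger_dens_log_lr.
rewrite /xi meanE tilted_expectE ?integrable_hellinger_dens_moment // poweR_EFin.
rewrite lee_fin; set M := Num.max _ _ / _.
have M0 : 0 <= M.
  by apply: divr_ge0; [rewrite le_max (ltW k0) orbT | rewrite mulr_ge0 ?subr_ge0 ?ltW].
have := hellinger_moment_le a01 k0 Ka; rewrite -/M -ler_pdivrMr // => H.
have ki : 0 <= k^-1 by rewrite invr_ge0 ltW.
apply: le_trans (ge0_ler_powR ki _ _ H) _.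
- by rewrite nnegrE divr_ge0 ?hellinger_ge0 // Rintegral_ge0 // => x _;
    rewrite mulr_ge0 ?hellinger_dens_ge0 ?powR_ge0.
- by rewrite nnegrE mulr_ge0 ?powR_ge0.
by rewrite powRM ?powR_ge0 // -powRrM divff ?gt_eqF // powRr1.
Qed.

End hellinger.

Theorem lemma19 (R : realType) (d : measure_display) (Y : measurableType d)
    (nu : probability Y R) (w q : probability Y R) (f g : Y -> R)
    (mf : measurable_fun setT f) (mg : measurable_fun setT g)
    (f0 : forall x, 0 <= f x) (g0 : forall x, 0 <= g x)
    (wf : forall A, measurable A -> w A = (\int[nu]_(x in A) (f x)%:E)%E)
    (qg : forall A, measurable A -> q A = (\int[nu]_(x in A) (g x)%:E)%E)
    (hD : (renyi_div nu f g (1 / 2) < +oo)%E)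
    (kappa alpha : R) (hk : 0 < kappa) (ha0 : 0 < alpha) (ha1 : alpha < 1) :
  (poweR (tilted_expect nu f g alpha
            (fun x => (`|xi nu f g alpha x| `^ kappa)%:E)) (kappa^-1)
   <= (3 `^ (kappa^-1))%:E
      * maxe ((1 - alpha)%:E * renyi_div nu f g alpha) kappa%:E
      * ((alpha * (1 - alpha))^-1)%:E)%E.
Proof.
have [intf f1] := density_integrable mf f0 wf.
have [intg g1] := density_integrable mg g0 qg.
have a01 : 0 < alpha < 1 by rewrite ha0 ha1.
have Ka := hellinger_gt0 mf mg f0 g0 intf intg hD a01.
apply: le_trans (tilted_moment_le mf mg f0 g0 intf intg f1 g1 a01 hk Ka) _.
rewrite renyi_divE // -EFin_max -!EFinM lee_fin -mulrA; apply: ler_wpM2r.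
- by apply: divr_ge0; [rewrite le_max (ltW hk) orbT | rewrite mulr_ge0 ?subr_ge0 ?ltW].
- by rewrite ge0_ler_powR ?invr_ge0 ?nnegrE ?ltW //; lra.
Qed.
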